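(* Let $m\in\mathbb Z\setminus\{0\}$. (a) For $\xi,\xi'\in\mathbb Z_m$ the following are equivalent: (1) there is a positive integer $d$ with $\gcd(\xi,m)=\gcd(\xi',m)=d$ and $\pi(\xi/d)=\pi(\xi'/d)$, where $\pi:\mathbb Z_m\to\mathbb Z_{m/d}$ is the canonical ring homomorphism; (2) $r_i(\xi)=r_i(\xi')$ for every $i\ge1$. (b) The map $\xi\mapsto (r_i(\xi))_{i\ge1}$ is a homeomorphism from the group of units $\mathbb Z_m^\times$ onto $(\mathbb Z/m\mathbb Z)^\times\times(\mathbb Z/m\mathbb Z)^{\mathbb N}$ with the product topology, where $\mathbb Z/m\mathbb Z$ is identified with $\{0,\dots,|m|-1\}$ and $(\mathbb Z/m\mathbb Z)^\times$ with the elements of $\{0,\dots,|m|-1\}$ coprime to $m$.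
   Context: $\mathbb Z_m=\varprojlim\mathbb Z/m^h\mathbb Z$ is the ring of $m$-adic integers with the $m$-adic topology. Every nonzero ideal of $\mathbb Z_m$ is uniquely of the form $d\mathbb Z_m$ with $d$ a positive integer whose prime divisors divide $m$; for $n\in\mathbb Z$, $\xi\in\mathbb Z_m$, $\gcd(n,\xi)$ is the positive integer $d$ with $n\mathbb Z_m+\xi\mathbb Z_m=d\mathbb Z_m$; since nonzero integers are not zero divisors in $\mathbb Z_m$, $\xi/d\in\mathbb Z_m$ is well defined when $\xi\in d\mathbb Z_m$. The functions $r_i$: for $\xi\in\mathbb Z_m$, $r_0(\xi)=0$, $s_0(\xi)=1$, and for $i\ge1$, $r_i(\xi)\in\{0,\dots,|m|-1\}$ and $s_i(\xi)\in\mathbb Z_m$ are the unique elements with $\xi s_{i-1}(\xi)=m s_i(\xi)+r_i(\xi)$. *)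

From Stdlib Require Import ClassicalEpsilon.
From mathcomp Require Import all_boot all_order all_algebra.
Set Implicit Arguments. Unset Strict Implicit. Unset Printing Implicit Defensive.
Import Order.TTheory GRing.Theory Num.Theory.

(* An element of Z_m is a sequence (x h)_h with x h in Z/|m|^h Z (as residues
   0 <= x h < |m|^h) compatible with the transition maps Z/m^(h+1) -> Z/m^h. *)
Definition padic := nat -> nat.

Definition is_Zm (m : int) (x : padic) : Prop :=
  forall h : nat, x h < (absz m) ^ h /\ x h.+1 %% (absz m) ^ h = x h.

Definition Zm_of_int (m : int) (n : int) : padic :=
  fun h => absz (n %% ((absz m) ^ h)%:Z)%Z.

Definition Zm_add (m : int) (x y : padic) : padic :=
  fun h => (x h + y h) %% (absz m) ^ h.

Definition Zm_mul (m : int) (x y : padic) : padic :=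
  fun h => (x h * y h) %% (absz m) ^ h.

Definition Zm_one (m : int) : padic := Zm_of_int m 1.

Definition Zm_unit (m : int) (x : padic) : Prop :=
  is_Zm m x /\ exists y, is_Zm m y /\ Zm_mul m x y = Zm_one m.

Definition Zm_ideal_gen (m n : int) (xi : padic) (d : nat) : Prop :=
  forall z, is_Zm m z ->
    ((exists a b, is_Zm m a /\ is_Zm m b /\
        z = Zm_add m (Zm_mul m (Zm_of_int m n) a) (Zm_mul m xi b))
     <-> (exists c, is_Zm m c /\ z = Zm_mul m (Zm_of_int m d%:Z) c)).

Definition Zm_gcd (m n : int) (xi : padic) (d : nat) : Prop :=
  0 < d /\ (forall p, prime p -> p %| d -> p %| absz m) /\ Zm_ideal_gen m n xi d.

(* canonical ring homomorphism Z_m -> Z_n (n | m): reduction mod n^h at level h *)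
Definition Zm_proj (n : int) (x : padic) : padic :=
  fun h => x h %% (absz n) ^ h.

Definition rs_spec (m : int) (xi : padic) (r : nat -> nat) (s : nat -> padic) : Prop :=
  r 0 = 0 /\ s 0 = Zm_one m /\
  forall i, 0 < i ->
    r i < absz m /\ is_Zm m (s i) /\
    Zm_mul m xi (s i.-1) = Zm_add m (Zm_mul m (Zm_of_int m m) (s i)) (Zm_of_int m (r i)%:Z).

Definition Zm_r (m : int) (xi : padic) : nat -> nat :=
  epsilon (inhabits (fun _ => 0)) (fun r => exists s, rs_spec m xi r s).

(* subspace topology on Z_m^x induced by the m-adic topology
   (basic neighbourhoods x + m^h Z_m) *)
Definition Zm_units_open (m : int) (W : padic -> Prop) : Prop :=
  (forall x, W x -> Zm_unit m x) /\
  forall x, W x -> exists h : nat, forall y, Zm_unit m y ->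
    (exists c, is_Zm m c /\ y = Zm_add m x (Zm_mul m (Zm_of_int m (m ^+ h)) c)) ->
    W y.

(* (Z/mZ)^x x (Z/mZ)^N, encoded as a : nat -> nat with a 0 the (Z/mZ)^x
   coordinate and a (i+1) the i-th coordinate of (Z/mZ)^N; Z/mZ = {0..|m|-1} *)
Definition digit_space (m : int) (a : nat -> nat) : Prop :=
  coprime (a 0) (absz m) /\ forall i, a i < absz m.

(* product topology (discrete factors): basic opens fix finitely many coords *)
Definition digit_open (m : int) (V : (nat -> nat) -> Prop) : Prop :=
  (forall a, V a -> digit_space m a) /\
  forall a, V a -> exists k : nat, forall b, digit_space m b ->
    (forall i, i < k -> b i = a i) -> V b.

Definition homeomorphism (X Y : Type) (openA : (X -> Prop) -> Prop)
  (openB : (Y -> Prop) -> Prop) (A : X -> Prop) (B : Y -> Prop) (f : X -> Y) : Prop :=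
  (forall x, A x -> B (f x)) /\
  (forall x y, A x -> A y -> f x = f y -> x = y) /\
  (forall b, B b -> exists x, A x /\ f x = b) /\
  (forall V : Y -> Prop, (forall b, V b -> B b) ->
     (openB V <-> openA (fun x => A x /\ V (f x)))).

(* Run the recursion xi s_(i-1) = m s_i + r_i on an integer E instead of xi.  Replacing E by
   E + n^k t leaves r_1, ..., r_k unchanged and adds t E^k to r_(k+1) modulo n, so r_i(xi)
   is the i-th digit of any level xi_h with h >= i.  The same computation shows that, for E
   prime to n, the first k digits determine E modulo n^k, and that every digit string whose
   first digit is prime to n occurs; with the basic open sets "fixed level h" and "fixed
   first h digits" this is (b).  For (a), write xi = d eta with d = gcd(xi, m) and n = m/d:
   the digits of xi are d times the n-digits of eta, and eta is prime to n, so xi and xi'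
   have the same digits iff eta and eta' agree modulo every power of n. *)

From mathcomp Require Import all_boot all_order all_algebra ring.
From Stdlib Require Import ClassicalEpsilon FunctionalExtensionality.
Set Implicit Arguments. Unset Strict Implicit. Unset Printing Implicit Defensive.
Import GRing.Theory Num.Theory.
Local Open Scope ring_scope.

Lemma dvdn_exp_primes d n : (0 < d)%N ->
  (forall p, prime p -> (p %| d)%N -> (p %| n)%N) -> (d %| n ^ d)%N.
Proof.
move=> d_gt0 d_primes; apply/dvdn_partP => // p; rewrite mem_primes => /and3P[p_pr _ p_d].
rewrite p_part; apply: dvdn_trans (dvdn_exp2l p (ltnW (ltn_logl p d_gt0))) _.
by rewrite dvdn_exp2r // d_primes.
Qed.

Lemma dvdz_subC d a b : (d %| a - b)%Z = (d %| b - a)%Z.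
Proof. by rewrite -opprB rpredN. Qed.

Lemma dvdz_subM d a a' b b' :
  (d %| a - a')%Z -> (d %| b - b')%Z -> (d %| a * b - a' * b')%Z.
Proof.
move=> da db; have -> : a * b - a' * b' = (a - a') * b + a' * (b - b') by ring.
by apply: rpredD; [apply: dvdz_mulr | apply: dvdz_mull].
Qed.

Lemma dvdz_exprS (n : int) k : (n %| n ^+ k.+1)%Z.
Proof. by rewrite exprS dvdz_mulr. Qed.

Lemma dvdz_subrr d a : (d %| a - a)%Z.
Proof. by rewrite subrr dvdz0. Qed.

Lemma dvdz_sub_trans d a b c : (d %| a - b)%Z -> (d %| b - c)%Z -> (d %| a - c)%Z.
Proof. by move=> dab dbc; rewrite -(subrK b a) -addrA rpredD. Qed.

Lemma gcdz_congr n a b : (n %| a - b)%Z -> gcdz a n = gcdz b n.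
Proof.
move=> n_ab; rewrite -gcdz_modl -[RHS]gcdz_modl; congr gcdz.
by apply/eqP; rewrite eqz_mod_dvd.
Qed.

Lemma dvdz_modz_sub a d : (d %| (a %% d)%Z - a)%Z.
Proof.
have -> : (a %% d)%Z - a = - ((a %/ d)%Z * d) by rewrite {2}(divz_eq a d); ring.
by rewrite rpredN dvdz_mull.
Qed.

(** * Digits of an integer *)

(* [digitz n E i] and [tailz n E i] are r_i(E) and s_i(E) computed in the integers:
   E s_(i-1) = n s_i + r_i with 0 <= r_i < |n|. *)
Fixpoint tailz (n E : int) (i : nat) : int :=
  if i is i'.+1 then ((E * tailz n E i') %/ n)%Z else 1.

Definition digitz (n E : int) (i : nat) : int :=
  if i is i'.+1 then ((E * tailz n E i') %% n)%Z else 0.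

Lemma tailzS n E i : E * tailz n E i = tailz n E i.+1 * n + digitz n E i.+1.
Proof. exact: divz_eq. Qed.

Section Digitz.
Variable n : int.
Hypothesis n_neq0 : n != 0.

Lemma digitz_ge0 E i : 0 <= digitz n E i.
Proof. by case: i => [|i] //=; rewrite modz_ge0. Qed.

Lemma digitz_lt E i : digitz n E i < `|n|.
Proof. by case: i => [|i] /=; [rewrite normr_gt0 | rewrite ltz_mod]. Qed.

Lemma digitz_bound E i : 0 <= digitz n E i < `|n|.
Proof. by rewrite digitz_ge0 digitz_lt. Qed.

Lemma modz_small_norm a : 0 <= a < `|n| -> (a %% n)%Z = a.
Proof. by move=> a_bd; rewrite -modz_abs abszE modz_small. Qed.

Lemma eqz_small_dvd a b : 0 <= a < `|n| -> 0 <= b < `|n| -> (n %| a - b)%Z -> a = b.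
Proof.
by move=> a_bd b_bd; rewrite -eqz_mod_dvd !modz_small_norm // => /eqP.
Qed.

Lemma tailz_digitz_unique X i r s h : 0 <= r < `|n| ->
  (n ^+ h.+1 %| X * tailz n X i - (n * s + r))%Z ->
  r = digitz n X i.+1 /\ (n ^+ h %| s - tailz n X i.+1)%Z.
Proof.
move=> r_bd; rewrite tailzS => nD.
have eq_r : r = digitz n X i.+1.
  apply: eqz_small_dvd; rewrite ?digitz_bound //.
  have -> : r - digitz n X i.+1 = (tailz n X i.+1 - s) * n
      - (tailz n X i.+1 * n + digitz n X i.+1 - (n * s + r)) by ring.
  by rewrite rpredB ?dvdz_mull // (dvdz_trans _ nD) // exprS dvdz_mulr.
split=> //; move: nD; rewrite -eq_r dvdz_subC exprSr.
have -> : n * s + r - (tailz n X i.+1 * n + r) = (s - tailz n X i.+1) * n by ring.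
by rewrite dvdz_mul2r.
Qed.

Lemma coprimez_digitz1 E : coprimez (digitz n E 1) n = coprimez E n.
Proof. by rewrite /coprimez /= mulr1 gcdz_modl. Qed.

Lemma digitzS_eq F E i : (n %| F * tailz n F i - E * tailz n E i)%Z ->
  digitz n F i.+1 = digitz n E i.+1 /\
  (tailz n F i.+1 - tailz n E i.+1) * n = F * tailz n F i - E * tailz n E i.
Proof.
move=> nD; have eq_dig : digitz n F i.+1 = digitz n E i.+1.
  by apply/eqP; rewrite eqz_mod_dvd.
by split=> //; rewrite !tailzS eq_dig; ring.
Qed.

Lemma tailz_perturb E t j l :
  (n ^+ l.+1 %| tailz n (E + n ^+ (j + l.+1)%N * t) j.+1 - tailz n E j.+1
                 - n ^+ l * t * E ^+ j)%Z.
Proof.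
elim: j l => [|j IH] l.
  set F := E + _ * t.
  have nD : (n %| F * tailz n F 0 - E * tailz n E 0)%Z.
    by rewrite /F /= !mulr1 addrAC subrr add0r exprS -mulrA dvdz_mulr.
  have [_] := digitzS_eq nD.
  rewrite /= !mulr1 /F addrAC subrr add0r add0n exprSr mulrAC => /(mulIf n_neq0) ->.
  by rewrite subrr dvdz0.
rewrite addSnnS; set F := E + _ * t.
have /dvdzP [w dS] := IH l.+1; rewrite -/F in dS.
have DE : F * tailz n F j.+1 - E * tailz n E j.+1
    = (n ^+ j * t * tailz n F j.+1 + E * w) * n ^+ l.+2 + n ^+ l.+1 * t * E ^+ j.+1.
  rewrite -[tailz n F j.+1](subrK (tailz n E j.+1)).
  rewrite -[_ - tailz n E j.+1](subrK (n ^+ l.+1 * t * E ^+ j)) dS.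
  rewrite /F exprD !exprS; ring.
have nD : (n %| F * tailz n F j.+1 - E * tailz n E j.+1)%Z.
  rewrite DE; apply: rpredD; first by apply: dvdz_mull; apply: dvdz_exprS.
  by apply: dvdz_mulr; apply: dvdz_mulr; apply: dvdz_exprS.
have [_ dS'] := digitzS_eq nD.
rewrite -(dvdz_mul2r n_neq0) mulrBl -exprSr dS' DE.
have -> : n ^+ l * t * E ^+ j.+1 * n = n ^+ l.+1 * t * E ^+ j.+1.
  by rewrite [n ^+ l.+1]exprSr; ring.
by rewrite addrK dvdz_mull.
Qed.

Lemma tailz_congr E F i l :
  (n ^+ (i + l)%N %| F - E)%Z -> (n ^+ l %| tailz n F i - tailz n E i)%Z.
Proof.
case: i => [|j]; first by rewrite subrr dvdz0.
case/dvdzP=> t /eqP; rewrite subr_eq addrC addSnnS mulrC => /eqP ->.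
have nl_nl1 : (n ^+ l %| n ^+ l.+1)%Z by rewrite exprS dvdz_mull.
rewrite -(subrK (n ^+ l * t * E ^+ j) (_ - _)) rpredD //; last by rewrite -mulrA dvdz_mulr.
exact: dvdz_trans nl_nl1 (tailz_perturb _ _ _ _).
Qed.

Lemma digitz_congr E F k i :
  (n ^+ k %| F - E)%Z -> (0 < i <= k)%N -> digitz n F i = digitz n E i.
Proof.
case: i => [//|j] nk_FE /andP[_ lt_jk].
have n_FE : (n %| F - E)%Z.
  apply: dvdz_trans nk_FE; rewrite -[X in (X %| _)%Z]expr1.
  by rewrite dvdz_exp2l // (leq_ltn_trans _ lt_jk).
have n_dS : (n %| tailz n F j - tailz n E j)%Z.
  by rewrite -[n]expr1; apply/tailz_congr/(dvdz_trans _ nk_FE); rewrite dvdz_exp2l ?addn1.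
suff nD : (n %| F * tailz n F j - E * tailz n E j)%Z by case: (digitzS_eq nD).
have -> : F * tailz n F j - E * tailz n E j
    = (F - E) * tailz n F j + E * (tailz n F j - tailz n E j) by ring.
by apply: rpredD; [apply: dvdz_mulr | apply: dvdz_mull].
Qed.

Lemma digitz_next E t k :
  (n %| digitz n (E + n ^+ k * t) k.+1 - digitz n E k.+1 - t * E ^+ k)%Z.
Proof.
set F := E + _ * t.
have -> : digitz n F k.+1 - digitz n E k.+1 - t * E ^+ k
    = (F * tailz n F k - E * tailz n E k - t * E ^+ k)
      - (tailz n F k.+1 - tailz n E k.+1) * n by rewrite !tailzS; ring.
rewrite rpredB ?dvdz_mull //; case: k @F => [|j] F.
  by rewrite /F /= expr0 !mulr1 !mul1r addrAC addrK subrr dvdz0.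
have /dvdzP[w dS] := tailz_perturb E t j 0; rewrite addn1 -/F in dS.
have -> : F * tailz n F j.+1 - E * tailz n E j.+1 - t * E ^+ j.+1
    = n * (n ^+ j * t * tailz n F j.+1 + E * w).
  rewrite -[tailz n F j.+1](subrK (tailz n E j.+1)).
  rewrite -[_ - tailz n E j.+1](subrK (n ^+ 0 * t * E ^+ j)) dS /F !exprS expr0.
  ring.
by rewrite dvdz_mulr.
Qed.

(* The next digit detects t modulo n in E + n^k t, and t E^k = 0 forces t = 0 mod n. *)
Lemma dvdz_sub_digitz E F k : coprimez E n ->
  (forall i, (0 < i <= k)%N -> digitz n F i = digitz n E i) -> (n ^+ k %| F - E)%Z.
Proof.
move=> coEn; elim: k => [|k IH] dig; first by rewrite expr0 dvd1z.
have /dvdzP[t FE] : (n ^+ k %| F - E)%Z.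
  by apply: IH => i /andP[i_gt0 le_ik]; rewrite dig // i_gt0 leqW.
have defF : E + n ^+ k * t = F by rewrite mulrC -FE addrC subrK.
have := digitz_next E t k; rewrite defF dig ?leqnn // subrr sub0r rpredN.
rewrite Gauss_dvdzl ?coprimezXr 1?coprimez_sym // => n_t.
by rewrite FE exprS; apply: dvdz_mul n_t (dvdzz _).
Qed.

Lemma digitz_exists (rho : nat -> int) k :
  (forall i, 0 <= rho i < `|n|) -> coprimez (rho 0%N) n ->
  {E | forall i, (i <= k)%N -> digitz n E i.+1 = rho i}.
Proof.
move=> rho_bd co_rho0; elim: k => [|k [E dig]].
  exists (rho 0%N) => i; rewrite leqn0 => /eqP ->.
  by rewrite /= mulr1 modz_small_norm.
have coE : coprimez E n by rewrite -coprimez_digitz1 dig.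
have [u [v uv]] := Bezoutz (E ^+ k.+1) n.
have uE : u * E ^+ k.+1 = 1 - v * n by rewrite -(eqP (coprimezXl k.+1 coE)) -uv addrK.
set t := (rho k.+1 - digitz n E k.+2) * u.
exists (E + n ^+ k.+1 * t) => i; rewrite leq_eqVlt => /orP[/eqP -> | lt_ik].
  apply: eqz_small_dvd; rewrite ?digitz_bound ?rho_bd //.
  have := digitz_next E t k.+1; set R' := digitz n _ _ => nR'.
  have -> : R' - rho k.+1 = R' - digitz n E k.+2 - t * E ^+ k.+1
                            - (rho k.+1 - digitz n E k.+2) * v * n.
    by rewrite /t -mulrA uE; ring.
  by rewrite rpredB ?dvdz_mull.
rewrite (@digitz_congr E _ k.+1) ?dig //.
by rewrite addrC addKr dvdz_mulr.
Qed.

End Digitz.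

Lemma tailz_scale d n E i : 0 < d -> tailz (d * n) (d * E) i = tailz n E i.
Proof. by move=> d_gt0; elim: i => //= i ->; rewrite -mulrA divzMpl. Qed.

Lemma digitz_scale d n E i : 0 < d -> digitz (d * n) (d * E) i = d * digitz n E i.
Proof.
move=> d_gt0; case: i => [|i] /=; first by rewrite mulr0.
by rewrite tailz_scale // -mulrA mulz_modr.
Qed.

(** * Levels of m-adic integers *)

Lemma modz_abszX (m a : int) h : (a %% (`|m| ^ h)%N)%Z = (a %% m ^+ h)%Z.
Proof. by rewrite -abszX modz_abs. Qed.

Lemma Zm_projE n x h : Zm_proj n x h = ((x h)%:Z %% n ^+ h)%Z :> int.
Proof. by rewrite /Zm_proj -modz_nat modz_abszX. Qed.

Section Padic.
Variable m : int.
Hypothesis m_neq0 : m != 0.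

Lemma mexp_neq0 h : m ^+ h != 0.
Proof. exact: expf_neq0. Qed.

Lemma absz_expn_gt0 h : (0 < `|m| ^ h)%N.
Proof. by rewrite expn_gt0 absz_gt0 m_neq0. Qed.

Lemma Zm_addE x y h : Zm_add m x y h = ((x h)%:Z + (y h)%:Z) %% m ^+ h :> int.
Proof. by rewrite /Zm_add -modz_nat modz_abszX. Qed.

Lemma Zm_mulE x y h : Zm_mul m x y h = ((x h)%:Z * (y h)%:Z) %% m ^+ h :> int.
Proof. by rewrite /Zm_mul -modz_nat modz_abszX. Qed.

Lemma Zm_of_intE z h : Zm_of_int m z h = (z %% m ^+ h)%Z :> int.
Proof.
by rewrite /Zm_of_int modz_abszX gez0_abs // modz_ge0 // mexp_neq0.
Qed.

Lemma Zm_lt x h : is_Zm m x -> (x h < `|m| ^ h)%N.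
Proof. by move=> /(_ h)[]. Qed.

Lemma Zm_modE x h : is_Zm m x -> ((x h)%:Z %% m ^+ h)%Z = x h.
Proof. by move=> Zx; rewrite -modz_abszX modz_nat modn_small ?Zm_lt. Qed.

Lemma Zm_level1 x h : is_Zm m x -> (m ^+ h %| (x h.+1)%:Z - (x h)%:Z)%Z.
Proof.
move=> /(_ h)[_ <-]; rewrite -modz_nat modz_abszX -opprB rpredN.
exact: dvdz_modz_sub.
Qed.

Lemma Zm_level x h l : is_Zm m x -> (h <= l)%N -> (m ^+ h %| (x l)%:Z - (x h)%:Z)%Z.
Proof.
move=> Zx /subnKC <-; elim: (l - h)%N => [|k IH]; first by rewrite addn0 subrr dvdz0.
rewrite addnS; apply: dvdz_sub_trans IH.
exact: dvdz_trans (dvdz_exp2l _ (leq_addr k h)) (Zm_level1 _ Zx).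
Qed.

Lemma Zm_level_eq x y h : is_Zm m x -> is_Zm m y ->
  (m ^+ h %| (x h)%:Z - (y h)%:Z)%Z -> x h = y h.
Proof.
move=> Zx Zy xy; apply/eqP; rewrite -eqz_nat.
by rewrite -(Zm_modE h Zx) -(Zm_modE h Zy) eqz_mod_dvd.
Qed.

Lemma Zm_ext x y (v : nat -> int) : is_Zm m x -> is_Zm m y ->
  (forall h, (m ^+ h %| (x h)%:Z - v h)%Z) -> (forall h, (m ^+ h %| (y h)%:Z - v h)%Z) ->
  x = y.
Proof.
move=> Zx Zy xv yv; apply: functional_extensionality => h; apply: Zm_level_eq => //.
by apply: dvdz_sub_trans (xv h) _; rewrite dvdz_subC.
Qed.

Lemma Zm_add_dvd x y h a b : (m ^+ h %| (x h)%:Z - a)%Z -> (m ^+ h %| (y h)%:Z - b)%Z ->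
  (m ^+ h %| (Zm_add m x y h)%:Z - (a + b))%Z.
Proof.
move=> xa yb; rewrite Zm_addE; apply: dvdz_sub_trans (dvdz_modz_sub _ _) _.
by rewrite opprD addrACA rpredD.
Qed.

Lemma Zm_mul_dvd x y h a b : (m ^+ h %| (x h)%:Z - a)%Z -> (m ^+ h %| (y h)%:Z - b)%Z ->
  (m ^+ h %| (Zm_mul m x y h)%:Z - a * b)%Z.
Proof.
move=> xa yb; rewrite Zm_mulE; apply: dvdz_sub_trans (dvdz_modz_sub _ _) _.
exact: dvdz_subM.
Qed.

Lemma Zm_of_int_dvd z h : (m ^+ h %| (Zm_of_int m z h)%:Z - z)%Z.
Proof. by rewrite Zm_of_intE dvdz_modz_sub. Qed.

Lemma is_Zm_add x y : is_Zm m x -> is_Zm m y -> is_Zm m (Zm_add m x y).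
Proof.
move=> Zx Zy h; split; first exact: ltn_pmod (absz_expn_gt0 _).
rewrite /Zm_add modn_dvdm ?dvdn_exp2l // -modnDm.
by rewrite (proj2 (Zx h)) (proj2 (Zy h)).
Qed.

Lemma is_Zm_mul x y : is_Zm m x -> is_Zm m y -> is_Zm m (Zm_mul m x y).
Proof.
move=> Zx Zy h; split; first exact: ltn_pmod (absz_expn_gt0 _).
rewrite /Zm_mul modn_dvdm ?dvdn_exp2l // -modnMm.
by rewrite (proj2 (Zx h)) (proj2 (Zy h)).
Qed.

Definition Zm_of_seq (A : nat -> int) : padic := fun h => `|(A h %% m ^+ h)%Z|%N.

Lemma Zm_of_seqE A h : Zm_of_seq A h = (A h %% m ^+ h)%Z :> int.
Proof. by rewrite /Zm_of_seq gez0_abs // modz_ge0 // mexp_neq0. Qed.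

Lemma Zm_of_seq_dvd A h : (m ^+ h %| (Zm_of_seq A h)%:Z - A h)%Z.
Proof. by rewrite Zm_of_seqE dvdz_modz_sub. Qed.

Lemma is_Zm_of_seq A : (forall h, (m ^+ h %| A h.+1 - A h)%Z) -> is_Zm m (Zm_of_seq A).
Proof.
move=> A_compat h; split.
  by rewrite -ltz_nat Zm_of_seqE -abszX abszE ltz_mod ?mexp_neq0.
apply/eqP; rewrite -eqz_nat -modz_nat modz_abszX !Zm_of_seqE eqz_mod_dvd.
apply: dvdz_sub_trans (A_compat h).
exact: dvdz_trans (dvdz_exp2l _ (leqnSn h)) (dvdz_modz_sub _ _).
Qed.

Lemma Zm_of_int_seq z : Zm_of_int m z = Zm_of_seq (fun=> z).
Proof.
by apply: functional_extensionality => h; apply/eqP; rewrite -eqz_nat Zm_of_intE Zm_of_seqE.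
Qed.

Lemma is_Zm_of_int z : is_Zm m (Zm_of_int m z).
Proof. by rewrite Zm_of_int_seq; apply: is_Zm_of_seq => h; rewrite subrr dvdz0. Qed.

Local Ltac Zm_closed :=
  do ?[apply: is_Zm_add | apply: is_Zm_mul | apply: is_Zm_of_int | assumption].

(** * The digits of an m-adic integer *)

Lemma is_Zm_tails xi i : is_Zm m xi ->
  is_Zm m (Zm_of_seq (fun h => tailz m (xi (h + i)%N) i)).
Proof.
move=> Zxi; apply: is_Zm_of_seq => h /=; apply: (tailz_congr m_neq0).
by rewrite [(i + h)%N]addnC (Zm_level Zxi) // leq_add2r.
Qed.

(* s_i at level h needs xi at level h + i: every step divides by m. *)
Lemma rs_spec_digitz xi : is_Zm m xi ->
  rs_spec m xi (fun i => `|digitz m (xi i) i|%N)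
               (fun i => Zm_of_seq (fun h => tailz m (xi (h + i)%N) i)).
Proof.
move=> Zxi; split=> //; split.
  apply: functional_extensionality => h; apply/eqP.
  by rewrite -eqz_nat Zm_of_seqE /Zm_one Zm_of_intE.
case=> [//|j] _; rewrite succnK; split.
  by rewrite -ltz_nat gez0_abs ?digitz_ge0 // abszE digitz_lt.
have Zs := is_Zm_tails j Zxi; have Zs' := is_Zm_tails j.+1 Zxi.
split=> //.
apply: (Zm_ext (v := fun h => (xi h)%:Z * tailz m (xi (h + j)%N) j)) => [||h|h];
  try by Zm_closed.
  exact: Zm_mul_dvd (dvdz_subrr _ _) (Zm_of_seq_dvd _ _).
set X := xi (h + j.+1)%N.
apply: dvdz_sub_trans (Zm_add_dvd (Zm_mul_dvd (Zm_of_int_dvd _ _) (Zm_of_seq_dvd _ _))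
                                  (Zm_of_int_dvd _ _)) _.
rewrite gez0_abs ?digitz_ge0 // -(@digitz_congr _ m_neq0 _ X j.+1) ?leqnn //; last first.
  by rewrite (Zm_level Zxi) // leq_addl.
rewrite -/X mulrC -tailzS dvdz_subC; apply: dvdz_subM.
  by rewrite dvdz_subC (Zm_level Zxi) // leq_addr.
apply: (tailz_congr m_neq0).
by rewrite dvdz_subC addnC (Zm_level Zxi) // addnC leq_add2l.
Qed.

Lemma rs_spec_rE xi r s : is_Zm m xi -> rs_spec m xi r s ->
  forall i h, (0 < i <= h)%N -> (r i)%:Z = digitz m (xi h) i.
Proof.
move=> Zxi [_ [s0 rel]].
have step i : (forall h, (m ^+ h %| (s i h)%:Z - tailz m (xi (h + i)%N) i)%Z) ->
    forall h, (r i.+1)%:Z = digitz m (xi (h.+1 + i)%N) i.+1 /\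
              (m ^+ h %| (s i.+1 h)%:Z - tailz m (xi (h + i.+1)%N) i.+1)%Z.
  move=> s_i h; have [r_lt [Zs' rel']] := rel i.+1 isT; rewrite succnK in rel'.
  set X := xi (h.+1 + i)%N.
  have lhs : (m ^+ h.+1 %| (Zm_mul m xi (s i) h.+1)%:Z - X%:Z * tailz m X i)%Z.
    by apply: Zm_mul_dvd (s_i h.+1); rewrite dvdz_subC (Zm_level Zxi) // leq_addr.
  have rhs : (m ^+ h.+1 %| (Zm_mul m xi (s i) h.+1)%:Z
                          - (m * (s i.+1 h.+1)%:Z + (r i.+1)%:Z))%Z.
    rewrite rel'.
    exact: Zm_add_dvd (Zm_mul_dvd (Zm_of_int_dvd _ _) (dvdz_subrr _ _)) (Zm_of_int_dvd _ _).
  rewrite dvdz_subC in lhs.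
  have r_bd : 0 <= (r i.+1)%:Z < `|m| by rewrite le0z_nat -abszE ltz_nat.
  have [r_eq s_dvd] := tailz_digitz_unique m_neq0 r_bd (dvdz_sub_trans lhs rhs).
  split=> //; rewrite -addSnnS -/X; apply: dvdz_sub_trans s_dvd.
  by rewrite dvdz_subC (Zm_level Zs').
have s_tail i h : (m ^+ h %| (s i h)%:Z - tailz m (xi (h + i)%N) i)%Z.
  by elim: i h => [|i IH] h; [rewrite s0; apply: Zm_of_int_dvd | apply: (step i IH h).2].
case=> [//|i] h /andP[_ lt_ih]; rewrite (step i (s_tail i) 0%N).1 add1n.
by symmetry; apply: (digitz_congr m_neq0 (Zm_level Zxi lt_ih)); rewrite ltn0Sn leqnn.
Qed.

Lemma Zm_rE xi i h : is_Zm m xi -> (0 < i <= h)%N -> (Zm_r m xi i)%:Z = digitz m (xi h) i.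
Proof.
move=> Zxi; have [s] : exists s, rs_spec m xi (Zm_r m xi) s.
  apply: (epsilon_spec (inhabits (fun=> 0%N)) (fun r => exists s, rs_spec m xi r s)).
  by do 2 eexists; apply: rs_spec_digitz.
by move/(rs_spec_rE Zxi); apply.
Qed.

Lemma Zm_r1 xi : is_Zm m xi -> Zm_r m xi 1 = xi 1%N.
Proof.
move=> Zxi; apply/eqP; rewrite -eqz_nat (Zm_rE (h := 1) Zxi) //=.
by rewrite mulr1 -{2}(Zm_modE 1 Zxi) expr1.
Qed.

(** * Units and the homeomorphism *)

Lemma gcdz_level x h : is_Zm m x -> (0 < h)%N -> gcdz (x h) m = gcdz (x 1%N) m.
Proof.
by move=> Zx h_gt0; apply: gcdz_congr; rewrite -[m in (m %| _)%Z]expr1 (Zm_level Zx).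
Qed.

Lemma coprimez_level x h : is_Zm m x -> (0 < h)%N -> coprimez (x h) m = coprimez (x 1%N) m.
Proof. by move=> Zx h_gt0; rewrite /coprimez gcdz_level. Qed.

Lemma coprimez_levelX x h : is_Zm m x -> coprimez (x 1%N) m -> coprimez (x h) (m ^+ h).
Proof.
move=> Zx co_x1; case: h => [|h]; first by rewrite expr0 /coprimez gcdz1.
by rewrite coprimez_pexpr // coprimez_level.
Qed.

Lemma Zm_unitP x : is_Zm m x -> Zm_unit m x <-> coprimez (x 1%N) m.
Proof.
move=> Zx; split=> [[_ [y [Zy xy]]] | co_x1].
  have xy1 : (m ^+ 1 %| (x 1%N)%:Z * (y 1%N)%:Z - 1)%Z.
    have := Zm_mul_dvd (dvdz_subrr _ (x 1%N)%:Z) (dvdz_subrr _ (y 1%N)%:Z).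
    rewrite xy dvdz_subC.
    by move/dvdz_sub_trans; apply; apply: Zm_of_int_dvd.
  move: xy1; rewrite expr1 => /dvdzP[q e]; apply/coprimezP; exists ((y 1%N)%:Z, - q).
  by rewrite /= mulNr -e; ring.
pose u h := projT1 (Bezoutz (x h) (m ^+ h)).
have u_inv h : (m ^+ h %| u h * (x h)%:Z - 1)%Z.
  rewrite /u; case: (Bezoutz _ _) => /= uh [v]; rewrite (eqP (coprimez_levelX h Zx co_x1)).
  by move=> <-; rewrite opprD addNKr rpredN dvdz_mull.
have Zy : is_Zm m (Zm_of_seq u).
  apply: is_Zm_of_seq => h.
  have -> : u h.+1 - u h = - u h.+1 * (u h * (x h)%:Z - 1) + u h * (u h.+1 * (x h.+1)%:Z - 1)
                          - u h * u h.+1 * ((x h.+1)%:Z - (x h)%:Z) by ring.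
  rewrite rpredB ?rpredD ?dvdz_mull ?u_inv ?(Zm_level Zx) //.
  exact: dvdz_trans (dvdz_exp2l _ (leqnSn h)) (u_inv h.+1).
split=> //; exists (Zm_of_seq u); split=> //.
apply: (Zm_ext (v := fun=> 1)) => [||h|h]; try by Zm_closed.
- apply: dvdz_sub_trans (Zm_mul_dvd (dvdz_subrr _ _) (Zm_of_seq_dvd u h)) _.
  by rewrite mulrC u_inv.
- exact: Zm_of_int_dvd.
Qed.

Lemma Zm_r_digit_space x : Zm_unit m x -> digit_space m (fun i => Zm_r m x i.+1).
Proof.
move=> Ux; have Zx := proj1 Ux; split=> [|i].
  by rewrite Zm_r1 // -[x 1%N]/`|(x 1%N)%:Z|%N -coprimezE -Zm_unitP.
by rewrite -ltz_nat (Zm_rE (h := i.+1) Zx) ?leqnn // abszE digitz_lt.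
Qed.

Lemma Zm_level_eq_digits x y h : Zm_unit m x -> is_Zm m y ->
  x h = y h <-> (forall i, (i < h)%N -> Zm_r m x i.+1 = Zm_r m y i.+1).
Proof.
move=> Ux Zy; have Zx := proj1 Ux; split=> [xy_h i lt_ih | dig].
  by apply/eqP; rewrite -eqz_nat !(Zm_rE (h := h)) ?xy_h.
case: h dig => [|h] dig.
  by have := Zm_lt 0 Zx; have := Zm_lt 0 Zy; rewrite !expn0 !ltnS !leqn0 => /eqP-> /eqP->.
apply: Zm_level_eq; rewrite // dvdz_subC.
apply: (dvdz_sub_digitz m_neq0); first by rewrite coprimez_level // -Zm_unitP.
case=> [//|i] /andP[_ lt_ih].
by rewrite -!(Zm_rE (h := h.+1)) ?dig.
Qed.

Lemma Zm_coset_level x y h : is_Zm m x -> is_Zm m y ->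
  (exists c, is_Zm m c /\ y = Zm_add m x (Zm_mul m (Zm_of_int m (m ^+ h)) c)) <-> x h = y h.
Proof.
move=> Zx Zy; split=> [[c [Zc ->]] | xy_h].
  apply: Zm_level_eq => //.
    by Zm_closed.
  rewrite dvdz_subC; apply: dvdz_sub_trans
    (Zm_add_dvd (dvdz_subrr _ _) (Zm_mul_dvd (Zm_of_int_dvd _ _) (dvdz_subrr _ _))) _.
  by rewrite addrAC subrr add0r dvdz_mulr.
pose c l := (((y (l + h)%N)%:Z - (x (l + h)%N)%:Z) %/ m ^+ h)%Z.
have cE l : c l * m ^+ h = (y (l + h)%N)%:Z - (x (l + h)%N)%:Z.
  apply: divzK; apply: dvdz_sub_trans (Zm_level Zy (leq_addl l h)) _.
  by rewrite -xy_h dvdz_subC (Zm_level Zx) // leq_addl.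
have Zc : is_Zm m (Zm_of_seq c).
  apply: is_Zm_of_seq => l; rewrite -(dvdz_mul2r (mexp_neq0 h)) -exprD mulrBl !cE addSn.
  have -> : forall a b a' b' : int, a - b - (a' - b') = (a - a') - (b - b') by move=> *; ring.
  by rewrite rpredB ?(Zm_level Zy) ?(Zm_level Zx).
exists (Zm_of_seq c); split=> //.
apply: (Zm_ext (v := fun l => (y l)%:Z)) => [||l|l] //=.
- by Zm_closed.
- exact: dvdz_subrr.
apply: dvdz_sub_trans
  (Zm_add_dvd (dvdz_subrr _ _) (Zm_mul_dvd (Zm_of_int_dvd _ _) (Zm_of_seq_dvd c l))) _ => /=.
rewrite mulrC cE.
have -> : (x l)%:Z + ((y (l + h)%N)%:Z - (x (l + h)%N)%:Z) - (y l)%:Z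
    = ((y (l + h)%N)%:Z - (y l)%:Z) - ((x (l + h)%N)%:Z - (x l)%:Z) by ring.
by rewrite rpredB ?(Zm_level Zy) ?(Zm_level Zx) // leq_addr.
Qed.

Lemma Zm_r_surj b : digit_space m b -> exists x, Zm_unit m x /\ (fun i => Zm_r m x i.+1) = b.
Proof.
move=> [co_b0 b_lt].
have rho_bd i : 0 <= (b i)%:Z < `|m| by rewrite le0z_nat -abszE ltz_nat b_lt.
have co_rho0 : coprimez (b 0%N)%:Z m by rewrite coprimezE.
pose E k := proj1_sig (digitz_exists m_neq0 k rho_bd co_rho0).
have E_dig k i : (i <= k)%N -> digitz m (E k) i.+1 = b i.
  exact: (proj2_sig (digitz_exists m_neq0 k rho_bd co_rho0)).
have co_E k : coprimez (E k) m by rewrite -(coprimez_digitz1 m) E_dig.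
have Zx : is_Zm m (Zm_of_seq E).
  apply: is_Zm_of_seq => h; apply: (dvdz_sub_digitz m_neq0 (co_E h)).
  by case=> [//|i] /andP[_ lt_ih]; rewrite !E_dig // ltnW // ltnW.
exists (Zm_of_seq E); split.
  have x1E : (m %| (Zm_of_seq E 1%N)%:Z - E 1%N)%Z.
    by rewrite -[m in (m %| _)%Z]expr1 Zm_of_seq_dvd.
  by apply/Zm_unitP; rewrite // /coprimez (gcdz_congr x1E); apply: co_E.
apply: functional_extensionality => i; apply/eqP; rewrite -eqz_nat.
rewrite (Zm_rE (h := i.+1) Zx) ?leqnn //.
by rewrite (digitz_congr m_neq0 (Zm_of_seq_dvd E i.+1)) ?E_dig ?leqnn ?leqnSn.
Qed.

Lemma Zm_r_homeomorphism :
  homeomorphism (Zm_units_open m) (digit_open m) (Zm_unit m) (digit_space m)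
    (fun xi i => Zm_r m xi i.+1).
Proof.
split; first exact: Zm_r_digit_space.
split=> [x y Ux Uy fxy | ].
  apply: functional_extensionality => h; apply/(Zm_level_eq_digits h Ux (proj1 Uy)) => i _.
  exact: (congr1 (fun f => f i) fxy).
split; first exact: Zm_r_surj.
move=> V V_sub; split=> [[_ V_open] | [_ U_open]].
  split=> [x [] // | x [Ux Vx]]; have [k Vk] := V_open _ Vx.
  exists k => y Uy /(Zm_coset_level k (proj1 Ux) (proj1 Uy)) xy_k.
  split=> //; apply: Vk; first exact: Zm_r_digit_space.
  by move=> i lt_ik; apply/esym; move: i lt_ik; apply/(Zm_level_eq_digits k Ux (proj1 Uy)).
split=> // a Va; have [x [Ux fx]] := Zm_r_surj (V_sub a Va).
have [h Uh] : exists h, _ := U_open x (conj Ux (eq_ind_r V Va fx)).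
exists h => b Db ab; have [y [Uy fy]] := Zm_r_surj Db.
have xy_h : x h = y h.
  apply/(Zm_level_eq_digits h Ux (proj1 Uy)) => i lt_ih.
  by rewrite (congr1 (fun f => f i) fx) (congr1 (fun f => f i) fy) ab.
have [_] := Uh y Uy ((Zm_coset_level h (proj1 Ux) (proj1 Uy)).2 xy_h).
by rewrite fy.
Qed.

(** * Digits and the gcd with m *)

Lemma exists_Zm_div (d : nat) z : (0 < d)%N -> (d%:Z %| m)%Z -> is_Zm m z ->
  (forall h, (d%:Z %| (z h.+1)%:Z)%Z) ->
  exists c, is_Zm m c /\ z = Zm_mul m (Zm_of_int m d%:Z) c.
Proof.
move=> d_gt0 d_m Zz d_z; have d_neq0 : d%:Z != 0 by rewrite eqz_nat -lt0n.
pose c h := ((z h.+1)%:Z %/ d%:Z)%Z.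
have cE h : c h * d%:Z = z h.+1 := divzK (d_z h).
have Zc : is_Zm m (Zm_of_seq c).
  apply: is_Zm_of_seq => h; rewrite -(dvdz_mul2r d_neq0) mulrBl !cE.
  apply: dvdz_trans (Zm_level Zz (leqnSn _)).
  by rewrite exprSr; apply: dvdz_mul.
exists (Zm_of_seq c); split=> //.
apply: (Zm_ext (v := fun h => (z h)%:Z)) => [||h|h] //=.
- by Zm_closed.
- exact: dvdz_subrr.
apply: dvdz_sub_trans (Zm_mul_dvd (Zm_of_int_dvd _ _) (Zm_of_seq_dvd c h)) _.
by rewrite mulrC cE (Zm_level Zz).
Qed.

Lemma Zm_gcd_dvd xi (d : nat) : is_Zm m xi -> Zm_gcd m m xi d -> (d%:Z %| m)%Z.
Proof.
move=> Zxi [d_gt0 [d_primes ideal]].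
have [c [Zc mc]] : exists c, is_Zm m c /\ Zm_of_int m m = Zm_mul m (Zm_of_int m d%:Z) c.
  apply/(ideal _ (is_Zm_of_int m)); exists (Zm_one m), (Zm_of_int m 0).
  do 2![split; first by Zm_closed].
  apply: (Zm_ext (v := fun=> m)) => [||h|h]; try by Zm_closed.
    exact: Zm_of_int_dvd.
  apply: dvdz_sub_trans (Zm_add_dvd (Zm_mul_dvd (Zm_of_int_dvd _ _) (Zm_of_int_dvd _ _))
                                   (Zm_mul_dvd (dvdz_subrr _ _) (Zm_of_int_dvd _ _))) _.
  by rewrite mulr1 mulr0 addr0 subrr dvdz0.
(* m = d c in Z_m is read at level d, where d divides m^d since its primes divide m. *)
have d_md : (d%:Z %| m ^+ d)%Z by rewrite dvdzE abszX dvdn_exp_primes.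
have m_dc : (m ^+ d %| m - d%:Z * (c d)%:Z)%Z.
  apply: dvdz_sub_trans (_ : (m ^+ d %| m - (Zm_of_int m m d)%:Z)%Z) _.
    by rewrite dvdz_subC Zm_of_int_dvd.
  by rewrite mc; apply: Zm_mul_dvd (Zm_of_int_dvd _ _) (dvdz_subrr _ _).
by rewrite -(subrK (d%:Z * (c d)%:Z) m) rpredD ?dvdz_mulr // (dvdz_trans d_md).
Qed.

Lemma Zm_r_scale xi eta (d : nat) i h : is_Zm m xi -> (0 < d)%N -> (d%:Z %| m)%Z ->
  xi = Zm_mul m (Zm_of_int m d%:Z) eta -> (0 < i <= h)%N ->
  (Zm_r m xi i)%:Z = d%:Z * digitz (m %/ d%:Z)%Z (eta h) i.
Proof.
move=> Zxi d_gt0 d_m xi_eq ih; rewrite (Zm_rE Zxi ih).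
have xi_h : (m ^+ h %| (xi h)%:Z - d%:Z * (eta h)%:Z)%Z.
  by rewrite {1}xi_eq; apply: Zm_mul_dvd (Zm_of_int_dvd _ _) (dvdz_subrr _ _).
rewrite (digitz_congr m_neq0 xi_h ih) -digitz_scale ?ltz_nat //.
by rewrite (mulrC d%:Z (m %/ d%:Z)%Z) divzK.
Qed.

Lemma divz_dvd_neq0 d : (d %| m)%Z -> (m %/ d)%Z != 0.
Proof. by move=> d_m; apply: contraNneq m_neq0 => q0; rewrite -(divzK d_m) q0 mul0r. Qed.

Lemma Zm_r_eq_of_proj xi xi' eta eta' (d : nat) : is_Zm m xi -> is_Zm m xi' ->
  (0 < d)%N -> (d%:Z %| m)%Z ->
  xi = Zm_mul m (Zm_of_int m d%:Z) eta -> xi' = Zm_mul m (Zm_of_int m d%:Z) eta' ->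
  Zm_proj (m %/ d%:Z)%Z eta = Zm_proj (m %/ d%:Z)%Z eta' ->
  forall i, (0 < i)%N -> Zm_r m xi i = Zm_r m xi' i.
Proof.
move=> Zxi Zxi' d_gt0 d_m xi_eq xi'_eq proj_eq i i_gt0.
have ii : (0 < i <= i)%N by rewrite i_gt0 leqnn.
apply/eqP; rewrite -eqz_nat (Zm_r_scale Zxi d_gt0 d_m xi_eq ii).
rewrite (Zm_r_scale Zxi' d_gt0 d_m xi'_eq ii); apply/eqP; congr (_ * _).
apply: (digitz_congr (divz_dvd_neq0 d_m) _ ii).
by have /eqP := congr1 (fun f => (f i)%:Z) proj_eq; rewrite !Zm_projE eqz_mod_dvd.
Qed.

Lemma Zm_proj_eq_of_r xi xi' eta eta' (d : nat) :
  is_Zm m xi -> is_Zm m xi' -> is_Zm m eta -> is_Zm m eta' ->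
  (0 < d)%N -> (d%:Z %| m)%Z -> gcdz (xi 1%N) m = d%:Z ->
  xi = Zm_mul m (Zm_of_int m d%:Z) eta -> xi' = Zm_mul m (Zm_of_int m d%:Z) eta' ->
  (forall i, (0 < i)%N -> Zm_r m xi i = Zm_r m xi' i) ->
  Zm_proj (m %/ d%:Z)%Z eta = Zm_proj (m %/ d%:Z)%Z eta'.
Proof.
move=> Zxi Zxi' Zeta Zeta' d_gt0 d_m g_xi xi_eq xi'_eq r_eq.
set n := (m %/ d%:Z)%Z; have n_neq0 : n != 0 := divz_dvd_neq0 d_m.
have m_dn : m = d%:Z * n by rewrite mulrC divzK.
have d_neq0 : d%:Z != 0 by rewrite eqz_nat -lt0n.
have nm h : (n ^+ h %| m ^+ h)%Z by rewrite dvdz_exp2r // m_dn dvdz_mull.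
apply: functional_extensionality => h; apply/eqP; rewrite -eqz_nat !Zm_projE eqz_mod_dvd.
have co_eta : coprimez (eta h.+1)%:Z n.
  have : d%:Z * gcdz (eta h.+1)%:Z n = d%:Z * 1.
    rewrite mulr1 -{2}g_xi -(gcdz_level Zxi (ltn0Sn h)) (mulz_gcdr d%:Z) -m_dn.
    apply: gcdz_congr; apply: dvdz_trans (dvdz_exprS m h) _.
    by rewrite dvdz_subC {1}xi_eq; apply: Zm_mul_dvd (Zm_of_int_dvd _ _) (dvdz_subrr _ _).
  by move/(mulfI d_neq0)/eqP.
have dig i : (0 < i <= h)%N -> digitz n (eta' h.+1) i = digitz n (eta h.+1) i.
  move=> /andP[i_gt0 le_ih]; have ih : (0 < i <= h.+1)%N by rewrite i_gt0 leqW.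
  apply: (mulfI d_neq0); rewrite -(Zm_r_scale Zxi' d_gt0 d_m xi'_eq ih).
  by rewrite -(Zm_r_scale Zxi d_gt0 d_m xi_eq ih) r_eq.
have := dvdz_sub_digitz n_neq0 co_eta dig; rewrite dvdz_subC => eta_eta'.
apply: dvdz_sub_trans (dvdz_trans (nm h) _) (dvdz_sub_trans eta_eta' _).
  by rewrite dvdz_subC (Zm_level Zeta).
exact: dvdz_trans (nm h) (Zm_level Zeta' (leqnSn h)).
Qed.

Lemma Zm_gcd_level1 xi : is_Zm m xi -> Zm_gcd m m xi (gcdn (xi 1%N) `|m|).
Proof.
move=> Zxi; set d := gcdn _ _.
have d_gt0 : (0 < d)%N by rewrite gcdn_gt0 absz_gt0 m_neq0 orbT.
have d_m : (d%:Z %| m)%Z by rewrite dvdzE dvdn_gcdr.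
have d_xi h : (0 < h)%N -> (d%:Z %| (xi h)%:Z)%Z.
  by move=> h_gt0; rewrite -[d%:Z](gcdz_level Zxi h_gt0) dvdz_gcdl.
split=> //; split=> [p _ p_d | z Zz]; first exact: dvdn_trans p_d (dvdn_gcdr _ _).
split=> [[a [b [Za [Zb ->]]]] | [c [Zc ->]]].
  apply: exists_Zm_div => // [|h].
    by Zm_closed.
  have := Zm_add_dvd (Zm_mul_dvd (Zm_of_int_dvd m h.+1) (dvdz_subrr _ (a h.+1)%:Z))
                     (Zm_mul_dvd (dvdz_subrr _ (xi h.+1)%:Z) (dvdz_subrr _ (b h.+1)%:Z)).
  move/(dvdz_trans (dvdz_trans d_m (dvdz_exprS m h))) => d_diff.
  rewrite -(subrK (m * (a h.+1)%:Z + (xi h.+1)%:Z * (b h.+1)%:Z) (Zm_add m _ _ h.+1)%:Z).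
  apply: rpredD d_diff _; apply: rpredD; first exact: dvdz_mulr.
  exact: dvdz_mulr (d_xi _ (ltn0Sn h)).
(* d = u xi_1 + v m and xi = xi_1 + m sigma give d = m (v - u sigma) + xi u. *)
have [u [v uv]] := Bezoutz (xi 1%N) m; have {}uv : u * (xi 1%N)%:Z + v * m = d%:Z := uv.
have [|sigma [Zsigma xi_eq]] := (Zm_coset_level 1 (is_Zm_of_int (xi 1%N)) Zxi).2.
  by apply/eqP; rewrite -eqz_nat Zm_of_intE Zm_modE.
exists (Zm_mul m (Zm_add m (Zm_of_int m v) (Zm_mul m (Zm_of_int m (- u)) sigma)) c).
exists (Zm_mul m (Zm_of_int m u) c).
do 2![split; first by Zm_closed].
have xi_h h : (m ^+ h %| (xi h)%:Z - ((xi 1%N)%:Z + m ^+ 1 * (sigma h)%:Z))%Z.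
  rewrite {1}xi_eq.
  exact: Zm_add_dvd (Zm_of_int_dvd _ _) (Zm_mul_dvd (Zm_of_int_dvd _ _) (dvdz_subrr _ _)).
apply: (Zm_ext (v := fun h => d%:Z * (c h)%:Z)) => [||h|h]; try by Zm_closed.
  exact: Zm_mul_dvd (Zm_of_int_dvd _ _) (dvdz_subrr _ _).
apply: dvdz_sub_trans (Zm_add_dvd
  (Zm_mul_dvd (Zm_of_int_dvd m h) (Zm_mul_dvd (Zm_add_dvd (Zm_of_int_dvd v h)
      (Zm_mul_dvd (Zm_of_int_dvd (- u) h) (dvdz_subrr _ _))) (dvdz_subrr _ _)))
  (Zm_mul_dvd (xi_h h) (Zm_mul_dvd (Zm_of_int_dvd u h) (dvdz_subrr _ _)))) _.
rewrite -uv expr1; set t := (_ - _); have -> : t = 0 by rewrite /t; ring.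
exact: dvdz0.
Qed.

Lemma Zm_r_eqP xi xi' : is_Zm m xi -> is_Zm m xi' ->
  (exists d : nat, Zm_gcd m m xi d /\ Zm_gcd m m xi' d /\
     exists eta eta' : padic, is_Zm m eta /\ is_Zm m eta' /\
       xi = Zm_mul m (Zm_of_int m d%:Z) eta /\
       xi' = Zm_mul m (Zm_of_int m d%:Z) eta' /\
       Zm_proj (m %/ d%:Z)%Z eta = Zm_proj (m %/ d%:Z)%Z eta')
  <-> (forall i : nat, (0 < i)%N -> Zm_r m xi i = Zm_r m xi' i).
Proof.
move=> Zxi Zxi'; split=> [[d [g_xi [_ [eta [eta' [_ [_ [xi_eq [xi'_eq proj_eq]]]]]]]]] | r_eq].
  exact: Zm_r_eq_of_proj Zxi Zxi' g_xi.1 (Zm_gcd_dvd Zxi g_xi) xi_eq xi'_eq proj_eq.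
have xi1 : xi' 1%N = xi 1%N by rewrite -(Zm_r1 Zxi) -(Zm_r1 Zxi') r_eq.
have g_xi := Zm_gcd_level1 Zxi; have g_xi' := Zm_gcd_level1 Zxi'; rewrite xi1 in g_xi'.
set d := gcdn _ _ in g_xi g_xi'; have [d_gt0 _] := g_xi; have d_m := Zm_gcd_dvd Zxi g_xi.
have d_lev x h : is_Zm m x -> x 1%N = xi 1%N -> (d%:Z %| (x h.+1)%:Z)%Z.
  by move=> Zx x1; rewrite -[d%:Z]/(gcdz (xi 1%N) m) -x1 -(gcdz_level Zx (ltn0Sn h)) dvdz_gcdl.
have [eta [Zeta xi_eq]] := exists_Zm_div d_gt0 d_m Zxi (fun h => d_lev xi h Zxi erefl).
have [eta' [Zeta' xi'_eq]] := exists_Zm_div d_gt0 d_m Zxi' (fun h => d_lev xi' h Zxi' xi1).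
exists d; split=> //; split=> //; exists eta, eta'; do 4!split=> //.
exact: Zm_proj_eq_of_r Zxi Zxi' Zeta Zeta' d_gt0 d_m erefl xi_eq xi'_eq r_eq.
Qed.

End Padic.

Local Close Scope ring_scope.

Theorem proposition2p4 (m : int) (hm : m != 0%R) :
  (forall xi xi' : padic, is_Zm m xi -> is_Zm m xi' ->
     ((exists d : nat, Zm_gcd m m xi d /\ Zm_gcd m m xi' d /\
         exists eta eta' : padic, is_Zm m eta /\ is_Zm m eta' /\
           xi = Zm_mul m (Zm_of_int m d%:Z) eta /\
           xi' = Zm_mul m (Zm_of_int m d%:Z) eta' /\
           Zm_proj (m %/ d%:Z)%Z eta = Zm_proj (m %/ d%:Z)%Z eta')
      <-> (forall i : nat, 0 < i -> Zm_r m xi i = Zm_r m xi' i)))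
  /\ homeomorphism (Zm_units_open m) (digit_open m) (Zm_unit m) (digit_space m)
       (fun xi i => Zm_r m xi i.+1).
Proof.
split; last exact: Zm_r_homeomorphism.
by move=> xi xi'; apply: Zm_r_eqP.
Qed.
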